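(* Let $a,b\ge0$, $c>0$ with $b<c^2+ac$ and $d:=a^2/4+b>0$, and let $y$ be the solution of the scalar initial value problem $y'=y^2+ay-b$, $y(T)=c$. Then for $t\in(-\infty,T]$, $$y(t)\ge\frac{1}{T-t+\frac{1}{c+a/2}}-\frac{a}{2}.$$ *)

From Stdlib Require Export Reals.
Open Scope R_scope.

From Stdlib Require Import Reals Lra.
From Coquelicot Require Import Coquelicot.
Open Scope R_scope.

(* Shifting by a/2 turns the equation into z' = z^2 - d with d = a^2/4 + b.
   The explicit solution w(x) = 1/(T - x + 1/z(T)) of w' = w^2 agrees with z
   at T, and u = z - w satisfies the linear equation u' = (z + w) u - d.
   With an integrating factor, u e^{-P} is strictly decreasing and vanishes at
   T, so u > 0 before T. *)

Lemma linear_ode_backward_pos (u g h : R -> R) (t T : R) :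
  t < T ->
  (forall x, t <= x <= T -> continuity_pt g x) ->
  (forall x, t <= x <= T -> derivable_pt_lim u x (g x * u x + h x)) ->
  (forall x, t <= x <= T -> h x < 0) ->
  0 <= u T -> 0 < u t.
Proof.
  intros htT Cg Du Hh HuT.
  assert (Hle : t <= T) by lra.
  set (P := primitive Hle (FTC_P1 Hle Cg)).
  assert (DP : forall x, t <= x <= T -> derivable_pt_lim P x (g x))
    by (intros x Hx; apply RiemannInt_P28; exact Hx).
  set (psi := fun x => u x * exp (- P x)).
  assert (Dpsi : forall x, t <= x <= T ->
            derivable_pt_lim psi x (h x * exp (- P x))).
  { intros x Hx. apply is_derive_Reals.
    assert (Dux := proj2 (is_derive_Reals _ _ _) (Du x Hx)).
    assert (DPx := proj2 (is_derive_Reals _ _ _) (DP x Hx)).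
    unfold psi. auto_derive.
    - split; [exists (g x * u x + h x); exact Dux|].
      split; [exists (g x); exact DPx|exact I].
    - change (fun y => u y) with u; change (fun y => P y) with P.
      rewrite (is_derive_unique _ _ _ Dux), (is_derive_unique _ _ _ DPx). ring. }
  destruct (MVT_cor2 psi (fun x => h x * exp (- P x)) t T htT Dpsi)
    as [m [Hm Hm_range]].
  assert (Hdecr : 0 < h m * exp (- P m) * (T - t) * -1).
  { assert (0 < exp (- P m)) by apply exp_pos.
    assert (h m < 0) by (apply Hh; lra).
    replace (h m * exp (- P m) * (T - t) * -1)
      with (- h m * exp (- P m) * (T - t)) by ring.
    apply Rmult_lt_0_compat; [apply Rmult_lt_0_compat|]; lra. }
  assert (HpsiT : 0 <= psi T)
    by (unfold psi; apply Rmult_le_pos; [exact HuT|apply Rlt_le, exp_pos]).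
  assert (Hpsit : 0 < u t * exp (- P t)) by (fold (psi t); lra).
  destruct (Rlt_le_dec 0 (u t)) as [Hu|Hu]; [exact Hu|].
  assert (u t * exp (- P t) <= 0)
    by (apply Rmult_le_0_r; [exact Hu|apply Rlt_le, exp_pos]).
  lra.
Qed.

Lemma riccati_backward_comparison (z w : R -> R) (d t T : R) :
  0 < d -> t < T ->
  (forall x, t <= x <= T -> derivable_pt_lim z x (z x ^ 2 - d)) ->
  (forall x, t <= x <= T -> derivable_pt_lim w x (w x ^ 2)) ->
  w T <= z T -> w t < z t.
Proof.
  intros hd htT Dz Dw HT.
  assert (Cont : forall f f' x, derivable_pt_lim f x f' -> continuity_pt f x)
    by (intros f f' x Df; apply derivable_continuous_pt; exists f'; exact Df).
  enough (0 < z t - w t) by lra.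
  apply (linear_ode_backward_pos (fun x => z x - w x) (fun x => z x + w x) (fun _ => - d) t T).
  - exact htT.
  - intros x Hx. apply continuity_pt_plus; eapply Cont; [apply Dz|apply Dw]; exact Hx.
  - intros x Hx.
    replace ((z x + w x) * (z x - w x) + - d) with ((z x ^ 2 - d) - w x ^ 2) by ring.
    apply derivable_pt_lim_minus; [apply Dz|apply Dw]; exact Hx.
  - intros; lra.
  - lra.
Qed.

Lemma derivable_pt_lim_inv_affine_sq (s x : R) :
  x < s -> derivable_pt_lim (fun x => / (s - x)) x ((/ (s - x)) ^ 2).
Proof.
  intros Hx. apply is_derive_Reals. auto_derive; [lra|field; lra].
Qed.

Theorem corollaryA2 (a b c T : R) (y : R -> R)
  (ha : 0 <= a) (hb : 0 <= b) (hc : 0 < c)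
  (hbc : b < c ^ 2 + a * c)
  (hd : 0 < a ^ 2 / 4 + b)
  (hy' : forall t, t <= T -> derivable_pt_lim y t ((y t) ^ 2 + a * y t - b))
  (hyT : y T = c) :
  forall t, t <= T ->
    y t >= 1 / (T - t + 1 / (c + a / 2)) - a / 2.
Proof.
  intros t Ht.
  set (s := T + 1 / (c + a / 2)).
  assert (Hs : T < s)
    by (assert (0 < 1 / (c + a / 2)) by (apply Rdiv_lt_0_compat; lra); unfold s; lra).
  replace (T - t + 1 / (c + a / 2)) with (s - t) by (unfold s; ring).
  destruct Ht as [Hlt | ->].
  2:{ unfold s. rewrite hyT. apply Req_ge. field. lra. }
  enough (/ (s - t) < y t + a / 2) by (unfold Rdiv; lra).
  apply (riccati_backward_comparison (fun x => y x + a / 2) (fun x => / (s - x))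
           (a ^ 2 / 4 + b) t T hd Hlt).
  - intros x Hx.
    replace ((y x + a / 2) ^ 2 - (a ^ 2 / 4 + b)) with (y x ^ 2 + a * y x - b + 0)
      by field.
    apply derivable_pt_lim_plus; [apply hy'; lra|apply derivable_pt_lim_const].
  - intros x Hx. apply derivable_pt_lim_inv_affine_sq. lra.
  - unfold s. rewrite hyT. right. field. lra.
Qed.
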